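(* Let $\mathrm{SG}(n)$ denote the Sprague--Grundy value of a pile of $n$ tokens in the game $i\textsc{-Mark}(\{1\},\{2,3\})$. Let $m$ be a nonnegative integer with $m\equiv 5\pmod 6$, and suppose that $\mathrm{SG}(m-i)\neq 2$ for all integers $i$ with $0\le i\le 7$ and $i\le m$. Then $\mathrm{SG}(m)=0$.
   Context: In the impartial game $i\textsc{-Mark}(\{1\},\{2,3\})$, played on a single pile of $n\ge0$ tokens, a move replaces $n$ by $n-1$ (if $n\ge 1$), or by $n/2$ if $n>0$ is even, or by $n/3$ if $n>0$ is divisible by $3$. The Sprague--Grundy value is defined recursively by $\mathrm{SG}(n)=\mathrm{mex}\{\mathrm{SG}(w): w \text{ an option of } n\}$, where $\mathrm{mex}(T)$ is the smallest nonnegative integer not in $T$. *)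

From mathcomp Require Import all_boot.
Set Implicit Arguments. Unset Strict Implicit. Unset Printing Implicit Defensive.

(* mex s = smallest natural number not occurring in s
   (it is always <= size s, so searching in 0..size s suffices). *)
Definition mex (s : seq nat) : nat :=
  find (fun k => k \notin s) (iota 0 (size s).+1).

(* Options of a pile of n tokens in i-Mark({1},{2,3}):
   n-1 (if n >= 1), n/2 (if n > 0 even), n/3 (if n > 0 and 3 | n). *)
Definition options (n : nat) : seq nat :=
  if n is 0 then [::]
  else n.-1 :: ((if ~~ odd n then [:: n./2] else [::])
                ++ (if 3 %| n then [:: n %/ 3] else [::])).

(* Fuel-based SG recursion; all options of n > 0 are < n, so fuel n.+1 suffices. *)
Fixpoint sg_fuel (k n : nat) : nat :=
  match k with
  | 0 => 0
  | k'.+1 => mex [seq sg_fuel k' w | w <- options n]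
  end.

Definition SG (n : nat) : nat := sg_fuel n.+1 n.

From mathcomp Require Import all_boot zify.

(* Write m = 6t + 5.  A pile with a single option w has SG value [SG w == 0],
   so among 3t, 3t+1, 3t+2 one of the piles 6j, 6j+1 (t = 2j) or 6j+4, 6j+5
   (t = 2j+1) is a P-position.  On the other hand, if SG m were nonzero then,
   descending through the options of 6t+5, ..., 6t+1, 6t and using that the
   values of 6t+3 and 6t+2 are at most 2 but not 2, one finds SG(6t+4) = 0,
   SG(6t+3) = 1, SG(6t+2) = 0, SG(6t) = 0, which makes SG(3t), SG(3t+1) and
   SG(3t+2) all nonzero. *)

Lemma mex_has s : has (fun k => k \notin s) (iota 0 (size s).+1).
Proof.
apply/hasPn => all_in.
have sub_s : {subset iota 0 (size s).+1 <= s} by move=> k /all_in; rewrite negbK.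
by have := uniq_leq_size (iota_uniq 0 (size s).+1) sub_s; rewrite size_iota ltnn.
Qed.

Lemma mex_notin s : mex s \notin s.
Proof.
have := nth_find 0 (mex_has s); rewrite -/(mex s) nth_iota //.
by rewrite -[(size s).+1](size_iota 0) -has_find mex_has.
Qed.

Lemma mex_le_size s : mex s <= size s.
Proof. by have := mex_has s; rewrite has_find size_iota. Qed.

Lemma mex1 x : mex [:: x] = (x == 0).
Proof. by case: x. Qed.

Lemma options_lt n w : w \in options n -> w < n.
Proof.
case: n => // n; rewrite inE mem_cat => /or3P[/eqP -> // | | ].
- by case: ifP => // _; rewrite inE => /eqP ->; rewrite -divn2; lia.
- by case: ifP => // _; rewrite inE => /eqP ->; lia.
Qed.

Lemma sg_fuel_stable k k' n : n < k -> n < k' -> sg_fuel k n = sg_fuel k' n.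
Proof.
elim: k k' n => [|k IHk] [|k'] n //= lt_nk lt_nk'.
congr mex; apply/eq_in_map => w /options_lt lt_wn.
by apply: IHk; lia.
Qed.

Lemma SGE n : SG n = mex [seq SG w | w <- options n].
Proof.
rewrite {1}/SG /=; congr mex; apply/eq_in_map => w /options_lt lt_wn.
by apply: sg_fuel_stable; lia.
Qed.

Lemma SG_option_neq n w : w \in options n -> SG w != SG n.
Proof.
move=> w_opt; apply: contraNneq (mex_notin [seq SG w | w <- options n]).
by rewrite -SGE => <-; apply: map_f.
Qed.

Lemma SG_le_size_options n : SG n <= size (options n).
Proof. by rewrite SGE -(size_map SG); apply: mex_le_size. Qed.

Lemma SG_single_option {n w} : options n = [:: w] -> SG n = (SG w == 0).
Proof. by move=> opt_n; rewrite SGE opt_n mex1. Qed.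

Lemma options_6kS k r :
  options (6 * k + r.+1) =
  6 * k + r :: (if odd r then [:: 3 * k + r.+1./2] else [::])
            ++ (if r %% 3 == 2 then [:: 2 * k + r.+1 %/ 3] else [::]).
Proof.
rewrite addnS /= oddD oddM /= negbK.
have -> : (3 %| (6 * k + r).+1) = (r %% 3 == 2) by apply/idP/eqP; lia.
by case: ifP => odd_r; case: eqP => r3; rewrite -?divn2; do ?congr (_ :: _); lia.
Qed.

Lemma options_6k t : 0 < t -> options (6 * t) = [:: (6 * t).-1; 3 * t; 2 * t].
Proof.
by case: t => // s _; rewrite mulnS addnC options_6kS /=; do ?congr (_ :: _); lia.
Qed.

Lemma SG_3t_has_zero t : SG (3 * t) = 0 \/ SG (3 * t + 1) = 0 \/ SG (3 * t + 2) = 0.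
Proof.
have [j [-> | ->]] : exists j, t = 2 * j \/ t = 2 * j + 1 by exists (t %/ 2); lia.
- rewrite (_ : 3 * (2 * j) = 6 * j); last lia.
  rewrite (SG_single_option (options_6kS j 0)) addn0.
  by case: eqP; [left | right; left].
- rewrite (_ : 3 * (2 * j + 1) + 1 = 6 * j + 4); last lia.
  rewrite (_ : 3 * (2 * j + 1) + 2 = 6 * j + 5); last lia.
  rewrite (SG_single_option (options_6kS j 4)).
  by case: eqP; [right; left | right; right].
Qed.

Lemma SG_6t5_eq0 t : 0 < t -> SG (6 * t + 3) <> 2 -> SG (6 * t + 2) <> 2 ->
  SG (6 * t + 5) = 0.
Proof.
move=> t_gt0 SG3_neq2 SG2_neq2.
rewrite (SG_single_option (options_6kS t 4)); case: eqP => // SG4_eq0.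
have /eqP SG3_neq4 : SG (6 * t + 3) != SG (6 * t + 4).
  by apply: SG_option_neq; rewrite options_6kS mem_head.
have /eqP SG3t2_neq4 : SG (3 * t + 2) != SG (6 * t + 4).
  by apply: SG_option_neq; rewrite options_6kS !inE eqxx orbT.
have /eqP SG2_neq3 : SG (6 * t + 2) != SG (6 * t + 3).
  by apply: SG_option_neq; rewrite options_6kS mem_head.
have SG3_le2 := SG_le_size_options (6 * t + 3).
have SG2_le2 := SG_le_size_options (6 * t + 2).
rewrite !options_6kS /= in SG3_le2 SG2_le2.
have SG2_eq0 : SG (6 * t + 2) = 0 by lia.
have /eqP SG1_neq2 : SG (6 * t + 1) != SG (6 * t + 2).
  by apply: SG_option_neq; rewrite options_6kS mem_head.
have /eqP SG3t1_neq2 : SG (3 * t + 1) != SG (6 * t + 2).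
  by apply: SG_option_neq; rewrite options_6kS !inE eqxx orbT.
have SG0_eq0 : SG (6 * t) = 0.
  move: SG1_neq2; rewrite SG2_eq0 (SG_single_option (options_6kS t 0)) addn0.
  by case: eqP.
have /eqP SG3t_neq0 : SG (3 * t) != SG (6 * t).
  by apply: SG_option_neq; rewrite options_6k // !inE eqxx orbT.
by have := SG_3t_has_zero t; lia.
Qed.

Theorem mainTheorem7 (m : nat) :
  m %% 6 = 5 ->
  (forall i : nat, i <= 7 -> i <= m -> SG (m - i) <> 2) ->
  SG m = 0.
Proof.
move=> m_mod6 SG_neq2.
have m_eq : m = 6 * (m %/ 6) + 5 by lia.
have [t0 | t_gt0] := posnP (m %/ 6); first by rewrite m_eq t0.
rewrite m_eq; apply: SG_6t5_eq0 => //.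
- have -> : 6 * (m %/ 6) + 3 = m - 2 by lia.
  by apply: SG_neq2; lia.
- have -> : 6 * (m %/ 6) + 2 = m - 3 by lia.
  by apply: SG_neq2; lia.
Qed.
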